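(* $([-1,1],\oplus,-1,1)$, where $[-1,1]$ carries the Euclidean topology and $x\oplus y=\tfrac{x+y}{2}$, is a parametrised interval object in the category $\mathbf{Top}$ of topological spaces: for every space $P$, every midpoint-convex body $(A,m)$ in $\mathbf{Top}$ and all continuous $x_{-1},x_1\colon P\to A$ there is a unique continuous $h\colon P\times[-1,1]\to A$ with $h(p,-1)=x_{-1}(p)$, $h(p,1)=x_1(p)$ and $h(p,x\oplus y)=m(h(p,x),h(p,y))$.
   Context: In $\mathbf{Top}$ (products with product topology), a midpoint object is a space $A$ with continuous $m\colon A\times A\to A$ satisfying $m(x,x)=x$, $m(x,y)=m(y,x)$, $m(m(x,y),m(z,w))=m(m(x,z),m(y,w))$; cancellative if $m(x,y)=m(x,z)$ implies $y=z$; iterative if for every space $X$ and continuous $c\colon X\to A\times X$ there is a unique continuous $u\colon X\to A$ with $u=m\circ(\mathrm{id}_A\times u)\circ c$. A midpoint-convex body is a cancellative iterative midpoint object. *)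

From HB Require Import structures.
From mathcomp Require Import all_boot all_order all_algebra.
From mathcomp Require Import all_classical all_reals all_analysis.
From mathcomp Require Import lra.
Set Implicit Arguments. Unset Strict Implicit. Unset Printing Implicit Defensive.
Import Order.TTheory GRing.Theory Num.Theory.
Import numFieldNormedType.Exports.
Local Open Scope classical_set_scope.
Local Open Scope ring_scope.

Definition midpoint_object (A : topologicalType) (m : A -> A -> A) : Prop :=
  [/\ continuous (fun z : A * A => m z.1 z.2),
      (forall x : A, m x x = x),
      (forall x y : A, m x y = m y x) &
      (forall x y z w : A, m (m x y) (m z w) = m (m x z) (m y w))].

Definition cancellative (A : Type) (m : A -> A -> A) : Prop :=
  forall x y z : A, m x y = m x z -> y = z.

Definition iterative (A : topologicalType) (m : A -> A -> A) : Prop :=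
  forall (X : topologicalType) (c : X -> A * X), continuous c ->
    exists! u : X -> A,
      continuous u /\ u = (fun x => m (c x).1 (u (c x).2)).

Definition midpoint_convex_body (A : topologicalType) (m : A -> A -> A) : Prop :=
  [/\ midpoint_object m, cancellative m & iterative m].

(** The interval [-1,1] with the Euclidean (subspace) topology,
    as the subtype set_type `[-1,1] with the initial topology of the inclusion. *)
Notation Ipm1 R := (set_type (`[-1, 1]%classic : set R%type)).

Lemma Ipm1_m1P (R : realType) : ((-1 : R) \in (`[-1, 1]%classic : set R)).
Proof. by apply/mem_set; rewrite /= in_itv /=; apply/andP; split; lra. Qed.
Lemma Ipm1_1P (R : realType) : ((1 : R) \in (`[-1, 1]%classic : set R)).
Proof. by apply/mem_set; rewrite /= in_itv /=; apply/andP; split; lra. Qed.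

Definition Ineg1 (R : realType) : Ipm1 R := exist _ (-1) (Ipm1_m1P R).
Definition Ipos1 (R : realType) : Ipm1 R := exist _ 1 (Ipm1_1P R).

Lemma Imid_P (R : realType) (x y : Ipm1 R) :
  ((sval x + sval y) / 2 \in (`[-1, 1]%classic : set R)).
Proof.
case: x y => [x /set_mem/=] + [y /set_mem/=]; rewrite !in_itv /= => /andP[x1 x2] /andP[y1 y2].
by apply/mem_set; rewrite /= in_itv /=; apply/andP; split; lra.
Qed.

Definition Imid (R : realType) (x y : Ipm1 R) : Ipm1 R :=
  exist _ ((sval x + sval y) / 2) (Imid_P x y).

From HB Require Import structures.
From mathcomp Require Import all_boot all_order all_algebra.
From mathcomp Require Import all_classical all_reals all_analysis.
From mathcomp Require Import ring lra.
Import numFieldNormedType.Exports.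
Set Implicit Arguments. Unset Strict Implicit. Unset Printing Implicit Defensive.
Import Order.TTheory GRing.Theory Num.Theory.
Local Open Scope classical_set_scope.
Local Open Scope ring_scope.

(* Write [x_d] for [xm1] or [x1] according to the bit [d].  Iterativity applied to
   [(p, s) |-> (x_(s 0) p, (p, tail s))] gives the unique continuous [u] on [P * 2^N]
   with [u (p, s) = m (x_(s 0) p) (u (p, tail s))], an evaluation of binary expansions
   in [A].  A serial adder running on expansions [s], [t], [r] of [x], [y], [z] with
   [x + y = 2 z] is a second guarded recursion, and iterativity and cancellation turn
   it into [m (u (p, s)) (u (p, t)) = u (p, r)]; in particular [u (p, s)] only depends
   on the value of [s].  So [h (p, x) := u (p, greedy expansion of x)] satisfies the
   equations; it is continuous because, the Cantor space being compact, near a point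
   all expansions at once are controlled.  Conversely a solution [h] composed with the
   value map [2^N -> [-1, 1]] solves the recursion of [u], hence is determined by it. *)

Definition digit (A : Type) (a b : A) (d : bool) : A := if d then b else a.

Section MidpointAlgebra.
Variables (A : Type) (m : A -> A -> A).
Hypotheses (midxx : forall x, m x x = x) (midC : forall x y, m x y = m y x)
  (midACA : forall x y z w, m (m x y) (m z w) = m (m x z) (m y w)).

(* [quarter a b n] is the point [a + n/4 (b - a)] of the segment from [a] to [b]. *)
Definition quarter (a b : A) (n : nat) : A :=
  match n with
  | 0 => a
  | 1 => m (m a b) a
  | 2 => m a b
  | 3 => m (m a b) b
  | _ => b
  end.

Lemma quarter_split a b n k : (n <= 4)%N -> (k <= 4)%N -> (k <= 2 * n)%N ->
  (2 * n - k <= 4)%N -> quarter a b n = m (quarter a b k) (quarter a b (2 * n - k)).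
Proof.
move=> n4 k4 kn nk4.
have mid_quarters x y : m (m (m x y) x) (m (m x y) y) = m x y by rewrite midACA midxx.
case: n n4 kn nk4 => [|[|[|[|[|n]]]]] //= _;
case: k k4 => [|[|[|[|[|k]]]]] //= _ _ _; rewrite ?midxx //.
all: by rewrite ?mid_quarters // midC ?mid_quarters.
Qed.

(* One step of binary addition with carry: the digits [d], [e] of two summands,
   the digit [c] of their half-sum and the carry [d + e + 2 - 2 c]. *)
Lemma digit_carry a b (d e c : bool) :
  m (m (digit a b d) (digit a b e)) (quarter b a (d + e + 2 - 2 * c)%N) =
  m (digit a b c) (quarter a b (d + e + 2 - 2 * c)%N).
Proof.
have key x y : m (m x y) (m (m x y) x) = m x (m (m x y) y).
  by rewrite -{4}[x]midxx [in RHS]midACA [RHS]midC (midC x (m x y)).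
have kab := key a b; have kba := key b a; rewrite (midC b a) in kba.
case: d; case: e; case: c => /=; rewrite ?midxx ?(midC b a) //.
all: by rewrite ?(midC a b) midC.
Qed.

End MidpointAlgebra.

Lemma fst_continuous (U V : topologicalType) : continuous (@fst U V).
Proof. by move=> [u v]; exact: cvg_fst. Qed.

Lemma snd_continuous (U V : topologicalType) : continuous (@snd U V).
Proof. by move=> [u v]; exact: cvg_snd. Qed.

Lemma pair_continuous (Y U V : topologicalType) (f : Y -> U) (g : Y -> V) :
  continuous f -> continuous g -> continuous (fun y => (f y, g y)).
Proof. by move=> hf hg y; exact: cvg_pair (hf y) (hg y). Qed.

Lemma comp_continuous (X Y Z : topologicalType) (f : X -> Y) (g : Y -> Z) :
  continuous f -> continuous g -> continuous (fun x => g (f x)).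
Proof. by move=> hf hg x; exact: continuous_comp (hf x) (hg (f x)). Qed.

Lemma near_continuous_discrete (Y : topologicalType) (D : discreteTopologicalType)
  (f : Y -> D) y : continuous f -> \forall y' \near y, f y' = f y.
Proof. by move=> hf; exact: (hf y _ (discrete_set1 (f y))). Qed.

Lemma continuous_piecewise (Y Z : topologicalType) (K : Type) (key : Y -> K)
    (G : K -> Y -> Z) (g : Y -> Z) :
  (forall y, \forall y' \near y, key y' = key y) ->
  (forall k, continuous (G k)) -> (forall y, g y = G (key y) y) -> continuous g.
Proof.
move=> key_near hG hg y.
have e : {near y, G (key y) =1 g}.
  by apply: filterS (key_near y) => y' /= hy; rewrite hg hy.
apply: cvg_trans (near_eq_cvg e) _; rewrite (hg y); exact: hG.
Qed.

Lemma mid_continuous (A Y : topologicalType) (m : A -> A -> A) (f g : Y -> A) :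
  continuous (fun z : A * A => m z.1 z.2) -> continuous f -> continuous g ->
  continuous (fun y => m (f y) (g y)).
Proof.
move=> mc hf hg y; have /= hm := @mc (f y, g y).
exact: (continuous2_cvg _ hm (hf y) (hg y)).
Qed.

Definition cantor_shift (s : cantor_space) : cantor_space := fun i => s i.+1.

Lemma coord_continuous (i : nat) : continuous (fun s : cantor_space => s i).
Proof. exact: (@proj_continuous nat (fun _ => bool) i). Qed.

Lemma cantor_shift_continuous : continuous cantor_shift.
Proof.
by move=> s; apply/pointwise_cvgP => i; exact: (@proj_continuous nat (fun _ => bool) i.+1).
Qed.

Lemma near_prefix n (s : cantor_space) :
  \forall s' \near s, forall i, (i < n)%N -> s' i = s i.
Proof.
elim: n => [|n IH]; first by near=> s' => i.
have := near_continuous_discrete s (@coord_continuous n).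
apply: filterS2 IH => s' h1 h2 i; rewrite ltnS leq_eqVlt => /orP[/eqP->//|].
exact: h1.
Unshelve. all: by end_near. Qed.

Section BinaryExpansion.
Context {R : realType}.

Definition bit_sign (d : bool) : R := if d then 1 else -1.

(* [dyadic_approx n s] is [sum_(i < n) bit_sign (s i) / 2^(i+1)]. *)
Fixpoint dyadic_approx (n : nat) (s : cantor_space) : R :=
  if n is n.+1 then (bit_sign (s 0%N) + dyadic_approx n (cantor_shift s)) / 2 else 0.

Definition represents (s : cantor_space) (x : R) :=
  forall n, `|x - dyadic_approx n s| * 2 ^+ n <= 1.

Lemma exists_mul_pow2_gt (d c : R) : 0 < d -> exists n, c < d * 2 ^+ n.
Proof.
move=> d0; have b0 : 0 <= `|c| / d by rewrite divr_ge0 // ltW.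
have := archi_boundP b0; set n := Num.bound _ => hn.
exists n; have : (n < 2 ^ n)%N by rewrite ltn_expl.
rewrite -(ltr_nat R) natrX => h2.
have : `|c| / d < 2 ^+ n by apply: lt_trans hn h2.
rewrite ltr_pdivrMr // mulrC => hc; exact: le_lt_trans (ler_norm c) hc.
Qed.

Lemma dist_halve_pow2 (x y : R) n : `|x - y / 2| * 2 ^+ n.+1 = `|2 * x - y| * 2 ^+ n.
Proof.
have -> : x - y / 2 = (2 * x - y) / 2 by field.
rewrite normrM exprS (@ger0_norm _ (2^-1)) ?invr_ge0 //.
by set u := `|_|; set v := 2 ^+ n; field.
Qed.

Lemma represents_shift s x :
  represents s x <-> represents (cantor_shift s) (2 * x - bit_sign (s 0%N)).
Proof.
split=> h n.
  by have := h n.+1; rewrite /= dist_halve_pow2 opprD addrA.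
case: n => [|n] /=; last by rewrite dist_halve_pow2 opprD addrA; exact: h.
have := h 0%N; rewrite /= !expr0 !mulr1 !subr0 !ler_norml => /andP[h1 h2].
by case: (s 0%N) h1 h2 => /= h1 h2; apply/andP; split; lra.
Qed.

Lemma represents_norm_le1 s x : represents s x -> `|x| <= 1.
Proof. by move=> /(_ 0%N); rewrite /= subr0 expr0 mulr1. Qed.

Lemma represents_unique s x y : represents s x -> represents s y -> x = y.
Proof.
move=> hx hy; apply/eqP; rewrite -subr_eq0; apply/negPn/negP => hne.
have d0 : 0 < `|x - y| by rewrite normr_gt0.
have [n] := exists_mul_pow2_gt 2 d0.
have -> : x - y = (x - dyadic_approx n s) - (y - dyadic_approx n s).
  by rewrite opprB addrA subrK.
rewrite ltNge => /negP; apply.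
apply: le_trans (_ : (`|x - dyadic_approx n s| + `|y - dyadic_approx n s|) * 2 ^+ n <= 2).
  by rewrite ler_wpM2r ?exprn_ge0 // ler_normB.
by rewrite mulrDl; apply: le_trans (lerD (hx n) (hy n)) _; lra.
Qed.

Lemma dyadic_approx_prefix n s s' :
  (forall i, (i < n)%N -> s i = s' i) -> dyadic_approx n s = dyadic_approx n s'.
Proof.
elim: n s s' => [//|n IH] s s' h /=.
by rewrite h // (IH (cantor_shift s) (cantor_shift s')) // => i hi; apply: h.
Qed.

Definition greedy_step (y : R) : R := 2 * y - bit_sign (0 <= y).

(* Of the two expansions of a dyadic point, the one ending in [false]s is chosen. *)
Definition greedy_bits (y : R) : cantor_space := fun i => 0 <= iter i greedy_step y.

Lemma cantor_shift_greedy_bits y :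
  cantor_shift (greedy_bits y) = greedy_bits (greedy_step y).
Proof. by apply: funext => i; rewrite /cantor_shift /greedy_bits iterSr. Qed.

Lemma greedy_step_norm_le1 y : `|y| <= 1 -> `|greedy_step y| <= 1.
Proof.
rewrite /greedy_step; case: (lerP 0 y) => hy /=.
  by rewrite ger0_norm // => h; rewrite ler_norml; apply/andP; split; lra.
by rewrite ltr0_norm // => h; rewrite ler_norml; apply/andP; split; lra.
Qed.

Lemma represents_greedy_bits x : `|x| <= 1 -> represents (greedy_bits x) x.
Proof.
move=> hx n; elim: n x hx => [|n IH] x hx /=; first by rewrite subr0 expr0 mulr1.
rewrite dist_halve_pow2 opprD addrA cantor_shift_greedy_bits.
exact: IH (greedy_step_norm_le1 hx).
Qed.

Lemma greedy_bits_m1 : greedy_bits (-1) = fun _ => false.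
Proof.
have fix_m1 : greedy_step (-1) = -1 by rewrite /greedy_step /=; case: lerP => /=; lra.
have iter_m1 i : iter i greedy_step (-1) = -1 by elim: i => //= i ->.
by apply: funext => i; rewrite /greedy_bits iter_m1; apply/negbTE; rewrite -ltNge; lra.
Qed.

Lemma greedy_bits_1 : greedy_bits 1 = fun _ => true.
Proof.
have fix_1 : greedy_step 1 = 1 by rewrite /greedy_step /=; case: lerP => /=; lra.
have iter_1 i : iter i greedy_step 1 = 1 by elim: i => //= i ->.
by apply: funext => i; rewrite /greedy_bits iter_1 ler01.
Qed.

Lemma pow2S_inv n : 2 ^- n.+1 = 2 ^- n / 2 :> R.
Proof. by rewrite exprS invfM mulrC. Qed.

Lemma dyadic_approx_norm n s : `|dyadic_approx n s| <= 1 - 2 ^- n.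
Proof.
elim: n s => [|n IH] s /=; first by rewrite normr0 expr0 invr1 subrr.
rewrite pow2S_inv normrM (@ger0_norm _ 2^-1) ?invr_ge0 //.
have := IH (cantor_shift s); set S := dyadic_approx n (cantor_shift s) => hS.
have : `|bit_sign (s 0%N) + S| <= 1 + `|S|.
  by apply: le_trans (ler_normD _ _) _; case: (s 0%N); rewrite /= ?normrN normr1.
set e := 2 ^- n in hS *; set t := `|_ + _|; lra.
Qed.

Lemma dyadic_approx_cross k n s :
  dyadic_approx k s - 2 ^- k <= dyadic_approx n s + 2 ^- n.
Proof.
have pos j : 0 < 2 ^- j :> R by rewrite invr_gt0 exprn_gt0.
elim: k n s => [|k IH] [|n] s.
- by rewrite /= expr0 invr1; lra.
- have /[!ler_norml]/andP[] := dyadic_approx_norm n.+1 s.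
  have := pos n.+1; rewrite expr0 invr1 /=.
  set S := dyadic_approx n.+1 s; set e := 2 ^- n.+1; lra.
- have /[!ler_norml]/andP[] := dyadic_approx_norm k.+1 s.
  have := pos k.+1; rewrite expr0 invr1 /=.
  set S := dyadic_approx k.+1 s; set e := 2 ^- k.+1; lra.
- have := IH n (cantor_shift s).
  rewrite [dyadic_approx k.+1 s]/= [dyadic_approx n.+1 s]/= !pow2S_inv.
  set a := dyadic_approx k _; set b := dyadic_approx n _; set c := bit_sign _; lra.
Qed.

Definition stream_value (s : cantor_space) : R :=
  sup (range (fun n => dyadic_approx n s - 2 ^- n)).

Lemma represents_stream_value s : represents s (stream_value s).
Proof.
move=> n; have hs : has_sup (range (fun n => dyadic_approx n s - 2 ^- n)).
  split; first by exists (dyadic_approx 0 s - 2 ^- 0), 0%N.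
  by exists (dyadic_approx 0 s + 2 ^- 0) => _ [k _ <-]; exact: dyadic_approx_cross.
have lb : dyadic_approx n s - 2 ^- n <= stream_value s.
  by apply: sup_upper_bound => //; exists n.
have ub : stream_value s <= dyadic_approx n s + 2 ^- n.
  by apply: ge_sup; [case: hs | move=> _ [k _ <-]; exact: dyadic_approx_cross].
have : `|stream_value s - dyadic_approx n s| <= 2 ^- n.
  by rewrite ler_norml; apply/andP; split; lra.
by rewrite -[2 ^- n]div1r ler_pdivlMr // exprn_gt0.
Qed.

Lemma stream_value_shift s :
  stream_value s = (bit_sign (s 0%N) + stream_value (cantor_shift s)) / 2.
Proof.
apply: (represents_unique (represents_stream_value s)); apply/represents_shift.
have -> : 2 * ((bit_sign (s 0%N) + stream_value (cantor_shift s)) / 2) - bit_sign (s 0%N) =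
  stream_value (cantor_shift s) by field.
exact: represents_stream_value.
Qed.

Lemma stream_value_greedy_bits x : `|x| <= 1 -> stream_value (greedy_bits x) = x.
Proof.
move=> hx; apply: (represents_unique (represents_stream_value _)).
exact: represents_greedy_bits.
Qed.

Lemma stream_value_continuous : continuous stream_value.
Proof.
move=> s; apply/cvgrPdist_lt => eps e0.
have [n hn] := exists_mul_pow2_gt 2 e0.
apply: filterS (near_prefix n s) => s' h.
have e1 : dyadic_approx n s' = dyadic_approx n s by apply: dyadic_approx_prefix.
have := represents_stream_value s n; have := represents_stream_value s' n; rewrite e1.
have hp : 0 < 2 ^+ n :> R by rewrite exprn_gt0.
have -> : stream_value s - stream_value s' =
  (stream_value s - dyadic_approx n s) - (stream_value s' - dyadic_approx n s).
  by rewrite opprB addrA subrK.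
move=> h1 h2; apply: le_lt_trans (ler_normB _ _) _.
rewrite -(ltr_pM2r hp) mulrDl; apply: le_lt_trans (lerD h2 h1) _; lra.
Qed.

Lemma near_not_represents s x :
  ~ represents s x -> \forall p \near (s, x), ~ represents p.1 p.2.
Proof.
move=> /existsNP[n]; set a := `|x - dyadic_approx n s| => /negP; rewrite -ltNge => ha.
have k0 : 0 < 2 ^+ n :> R by rewrite exprn_gt0.
pose eps := (a * 2 ^+ n - 1) / 2 ^+ n.
have e0 : 0 < eps by rewrite divr_gt0 // subr_gt0.
exists ([set s' | forall i, (i < n)%N -> s' i = s i], ball x eps).
  by split; [exact: near_prefix | exact: nbhsx_ballx].
move=> [s' x'] /= [/dyadic_approx_prefix approx_eq].
rewrite -ball_normE /ball_ /= /eps ltr_pdivlMr // => near_x /(_ n).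
rewrite approx_eq.
have : a <= `|x' - dyadic_approx n s| + `|x - x'|.
  rewrite /a (_ : x - _ = (x' - dyadic_approx n s) + (x - x')); last by ring.
  exact: ler_normD.
move=> /(ler_wpM2r (ltW k0)); rewrite mulrDl.
move: near_x ha; set b := `|_ - dyadic_approx n s|; set c := `|x - x'|.
set k := 2 ^+ n; lra.
Qed.

End BinaryExpansion.

Section DigitMap.
Variables (R : realType) (A : topologicalType) (m : A -> A -> A).
Hypotheses (mc : continuous (fun z : A * A => m z.1 z.2))
  (midxx : forall x, m x x = x) (midC : forall x y, m x y = m y x)
  (midACA : forall x y z w, m (m x y) (m z w) = m (m x z) (m y w))
  (mcan : cancellative m) (mit : iterative m).
Variables (a b : A) (f : cantor_space -> A).
Hypotheses (fc : continuous f)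
  (f_shift : forall s, f s = m (digit a b (s 0%N)) (f (cantor_shift s))).

Lemma digit_map_false : f (fun _ => false) = a.
Proof.
by apply: (mcan (x := f (fun _ => false))); rewrite midxx [RHS]midC; exact: f_shift.
Qed.

Lemma digit_map_true : f (fun _ => true) = b.
Proof.
by apply: (mcan (x := f (fun _ => true))); rewrite midxx [RHS]midC; exact: f_shift.
Qed.

(* States of a serial adder computing the half-sum [r] of [s] and [t]. *)
Local Notation state := (cantor_space * cantor_space * cantor_space * nat)%type.

(* The carry [n] measures the discrepancy [x + y - 2 z = 2 (n - 2)] between the
   values of the three streams; it stays in [0, 4]. *)
Definition adder_inv (w : state) : Prop :=
  let: (s, t, r, n) := w in exists x y z : R,
  [/\ represents s x, represents t y, represents r z & x + y - 2 * z = 2 * (n%:R - 2)].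

Definition digit_excess (w : state) : nat :=
  let: (s, t, r, _) := w in (s 0%N + t 0%N + 2 - 2 * r 0%N)%N.

Definition adder_next (w : state) : state :=
  let: (s, t, r, n) := w in
  (cantor_shift s, cantor_shift t, cantor_shift r, (2 * n - digit_excess w)%N).

Definition adder_out (w : state) : A :=
  let: (s, t, _, _) := w in
  m (m (digit a b (s 0%N)) (digit a b (t 0%N))) (quarter m b a (digit_excess w)).

Definition adder_lhs (w : state) : A :=
  let: (s, t, _, n) := w in m (m (f s) (f t)) (quarter m b a n).

Definition adder_rhs (w : state) : A :=
  let: (_, _, r, n) := w in m (f r) (quarter m a b n).

Lemma adder_invP w : adder_inv w ->
  let: (s, t, r, n) := w in let k := digit_excess w in
  [/\ (n <= 4)%N, (k <= 4)%N, (k <= 2 * n)%N, (2 * n - k <= 4)%N & adder_inv (adder_next w)].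
Proof.
case: w => [[[s t] r] n] [x [y [z [hx hy hz he]]]] /=.
have unit_bounds u (v : R) : represents u v -> -1 <= v /\ v <= 1.
  by move/represents_norm_le1; rewrite ler_norml => /andP.
have [x1 x2] := unit_bounds _ _ hx; have [y1 y2] := unit_bounds _ _ hy.
have [z1 z2] := unit_bounds _ _ hz.
move/represents_shift: hx => hx; move/represents_shift: hy => hy.
move/represents_shift: hz => hz.
have [sx1 sx2] := unit_bounds _ _ hx; have [sy1 sy2] := unit_bounds _ _ hy.
have [sz1 sz2] := unit_bounds _ _ hz.
have bit_nat (c : bool) : [/\ bit_sign c = 2 * (c : nat)%:R - 1 :> R,
    0 <= (c : nat)%:R :> R & (c : nat)%:R <= 1 :> R].
  by case: c => /=; split; lra.
have [es s0 s1] := bit_nat (s 0%N); have [et t0 t1] := bit_nat (t 0%N).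
have [er r0 r1] := bit_nat (r 0%N).
rewrite es in sx1 sx2; rewrite et in sy1 sy2; rewrite er in sz1 sz2.
set k := (s 0%N + t 0%N + 2 - 2 * r 0%N)%N.
have ek : k%:R = (s 0%N : nat)%:R + (t 0%N : nat)%:R + 2 - 2 * (r 0%N : nat)%:R :> R.
  rewrite /k natrB; last by case: (r 0%N) => //; case: (s 0%N); case: (t 0%N).
  by rewrite !natrD; lra.
have n4 : (n <= 4)%N by rewrite -(ler_nat R); lra.
have kn : (k <= 2 * n)%N by rewrite -(ler_nat R) ek natrM; lra.
split => //; first by rewrite -(ler_nat R) ek; lra.
  by rewrite -(ler_nat R) natrB // natrM ek; lra.
exists (2 * x - bit_sign (s 0%N)), (2 * y - bit_sign (t 0%N)), (2 * z - bit_sign (r 0%N)).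
by split => //; rewrite natrB // natrM ek es et er; lra.
Qed.

Lemma adder_lhs_step w :
  adder_inv w -> adder_lhs w = m (adder_out w) (adder_lhs (adder_next w)).
Proof.
case: w => [[[s t] r] n] /adder_invP [n4 k4 kn nk4 _] /=.
rewrite (f_shift s) (f_shift t) (quarter_split midxx midC midACA _ _ n4 k4 kn nk4).
by rewrite (midACA (digit _ _ _)) midACA.
Qed.

Lemma adder_rhs_step w :
  adder_inv w -> adder_rhs w = m (adder_out w) (adder_rhs (adder_next w)).
Proof.
case: w => [[[s t] r] n] /adder_invP [n4 k4 kn nk4 _] /=.
rewrite (f_shift r) (quarter_split midxx midC midACA _ _ n4 k4 kn nk4).
by rewrite midACA (digit_carry midxx midC midACA).
Qed.

Lemma adder_inv_next w : adder_inv w -> adder_inv (adder_next w).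
Proof. by case: w => [[[s t] r] n] /adder_invP []. Qed.

Definition adder_key (w : state) : bool * bool * bool * nat :=
  (w.1.1.1 0%N, w.1.1.2 0%N, w.1.2 0%N, w.2).

Let s_continuous : continuous (fun w : state => w.1.1.1).
Proof.
apply: (@comp_continuous _ _ _ (fun w : state => w.1.1) fst); last exact: fst_continuous.
by apply: (@comp_continuous _ _ _ fst fst); exact: fst_continuous.
Qed.

Let t_continuous : continuous (fun w : state => w.1.1.2).
Proof.
apply: (@comp_continuous _ _ _ (fun w : state => w.1.1) snd); last exact: snd_continuous.
by apply: (@comp_continuous _ _ _ fst fst); exact: fst_continuous.
Qed.

Let r_continuous : continuous (fun w : state => w.1.2).
Proof.
apply: (@comp_continuous _ _ _ fst snd); [exact: fst_continuous | exact: snd_continuous].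
Qed.

Lemma near_adder_key w : \forall w' \near w, adder_key w' = adder_key w.
Proof.
have bit_near (g : state -> cantor_space) : continuous g ->
    \forall w' \near w, g w' 0%N = g w 0%N.
  move=> gc; apply: (near_continuous_discrete (f := fun w' => g w' 0%N)).
  exact: (comp_continuous gc (@coord_continuous 0)).
have es := bit_near _ s_continuous; have et := bit_near _ t_continuous.
have er := bit_near _ r_continuous.
have en := near_continuous_discrete w (@snd_continuous _ nat).
near=> w'; congr (_, _, _, _).
- exact: (near es w').
- exact: (near et w').
- exact: (near er w').
- exact: (near en w').
Unshelve. all: by end_near. Qed.

Lemma adder_out_continuous : continuous adder_out.
Proof.
apply: (@continuous_piecewise _ _ _ adder_key
  (fun k _ => m (m (digit a b k.1.1.1) (digit a b k.1.1.2))
    (quarter m b a (k.1.1.1 + k.1.1.2 + 2 - 2 * k.1.2)%N)) _ near_adder_key).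
  by move=> k; exact: cst_continuous.
by case=> [[[s t] r] n].
Qed.

Lemma adder_next_continuous : continuous adder_next.
Proof.
apply: (@continuous_piecewise _ _ _ adder_key
  (fun k w => (cantor_shift w.1.1.1, cantor_shift w.1.1.2, cantor_shift w.1.2,
    (2 * k.2 - (k.1.1.1 + k.1.1.2 + 2 - 2 * k.1.2))%N)) _ near_adder_key);
  last by case=> [[[s t] r] n].
move=> k; apply: pair_continuous; last exact: cst_continuous.
apply: pair_continuous; first apply: pair_continuous.
- exact: (comp_continuous s_continuous cantor_shift_continuous).
- exact: (comp_continuous t_continuous cantor_shift_continuous).
- exact: (comp_continuous r_continuous cantor_shift_continuous).
Qed.

Lemma adder_lhs_continuous : continuous adder_lhs.
Proof.
apply: (@continuous_piecewise _ _ _ adder_key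
  (fun k w => m (m (f w.1.1.1) (f w.1.1.2)) (quarter m b a k.2)) _ near_adder_key);
  last by case=> [[[s t] r] n].
have summands_continuous : continuous (fun w : state => m (f w.1.1.1) (f w.1.1.2)).
  exact: (mid_continuous mc (comp_continuous s_continuous fc)
    (comp_continuous t_continuous fc)).
by move=> k; apply: (mid_continuous mc summands_continuous); exact: cst_continuous.
Qed.

Lemma adder_rhs_continuous : continuous adder_rhs.
Proof.
apply: (@continuous_piecewise _ _ _ adder_key
  (fun k w => m (f w.1.2) (quarter m a b k.2)) _ near_adder_key);
  last by case=> [[[s t] r] n].
move=> k; apply: (mid_continuous mc (comp_continuous r_continuous fc)).
exact: cst_continuous.
Qed.

(* Both sides of the adder satisfy the same guarded recursion on the subspace of
   consistent states, so iterativity forces them to agree. *)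
Lemma digit_map_mid s t r (x y z : R) :
  represents s x -> represents t y -> represents r z -> x + y = 2 * z ->
  m (f s) (f t) = f r.
Proof.
move=> hx hy hz xyz.
have inv0 : adder_inv (s, t, r, 2%N) by exists x, y, z; split => //; lra.
pose next (w : set_type adder_inv) : set_type adder_inv :=
  exist _ (adder_next (sval w)) (mem_set (adder_inv_next (set_mem (svalP w)))).
have sval_continuous : continuous (fun w : set_type adder_inv => sval w).
  exact: initial_continuous.
have step_continuous :
    continuous (fun w : set_type adder_inv => (adder_out (sval w), next w)).
  apply: pair_continuous.
    exact: (comp_continuous sval_continuous adder_out_continuous).
  apply: (@continuous_comp_initial _ _ _ set_val).
  exact: (comp_continuous sval_continuous adder_next_continuous).
have [u0 [_ u0_unique]] := mit step_continuous.
have lhs_fix : u0 = fun w => adder_lhs (sval w).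
  apply: u0_unique; split.
    exact: (comp_continuous sval_continuous adder_lhs_continuous).
  by apply: funext => w /=; apply: adder_lhs_step; exact: set_mem (svalP w).
have rhs_fix : u0 = fun w => adder_rhs (sval w).
  apply: u0_unique; split.
    exact: (comp_continuous sval_continuous adder_rhs_continuous).
  by apply: funext => w /=; apply: adder_rhs_step; exact: set_mem (svalP w).
have := congr1 (fun g => g (exist _ (s, t, r, 2%N) (mem_set inv0)))
  (etrans (esym lhs_fix) rhs_fix).
by rewrite /= (midC b a) [LHS]midC [RHS]midC => /mcan.
Qed.

Lemma digit_map_represents s t (x : R) : represents s x -> represents t x -> f s = f t.
Proof. by move=> hs ht; rewrite -(digit_map_mid hs hs ht) ?midxx //; lra. Qed.

End DigitMap.

Section IntervalStreams.
Context {R : realType}.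

Lemma Ipm1_val_continuous : continuous (fun x : Ipm1 R => sval x).
Proof. exact: initial_continuous. Qed.

Lemma Ipm1_norm_le1 (x : Ipm1 R) : `|sval x| <= 1.
Proof.
have := set_mem (svalP x); rewrite /= in_itv /= => /andP[h1 h2].
by rewrite ler_norml h1 h2.
Qed.

Lemma stream_valueP (s : cantor_space) : stream_value s \in (`[-1, 1]%classic : set R).
Proof.
apply/mem_set; rewrite /= in_itv /= -ler_norml.
exact: represents_norm_le1 (represents_stream_value s).
Qed.

Definition stream_point (s : cantor_space) : Ipm1 R :=
  exist _ (stream_value s) (stream_valueP s).

Lemma stream_point_continuous : continuous stream_point.
Proof.
by apply: (@continuous_comp_initial _ _ _ set_val); exact: stream_value_continuous.
Qed.

Lemma stream_point_greedy_bits (x : Ipm1 R) : stream_point (greedy_bits (sval x)) = x.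
Proof. by apply: val_inj; exact: stream_value_greedy_bits (Ipm1_norm_le1 x). Qed.

Lemma stream_point_shift s :
  stream_point s = Imid (digit (Ineg1 R) (Ipos1 R) (s 0%N)) (stream_point (cantor_shift s)).
Proof. by apply: val_inj; rewrite /= stream_value_shift; case: (s 0%N). Qed.

(* By compactness of the Cantor space, near [z0] every expansion of the second
   coordinate of [z], not only the greedy one, is mapped into the neighbourhood. *)
Lemma greedy_lift_continuous (P A : topologicalType) (u : P * cantor_space -> A) :
  continuous u ->
  (forall p s t (x : R), represents s x -> represents t x -> u (p, s) = u (p, t)) ->
  continuous (fun z : P * Ipm1 R => u (z.1, greedy_bits (sval z.2))).
Proof.
move=> uc u_repr z0 W /= hW.
pose val2 (z : P * Ipm1 R) := sval z.2.
have val2_continuous : continuous val2.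
  by apply: (@comp_continuous _ _ _ snd (fun x : Ipm1 R => sval x));
    [exact: snd_continuous | exact: Ipm1_val_continuous].
have cover s : [set: cantor_space] s -> \forall s' \near s & z \near z0,
    represents s' (val2 z) -> W (u (z.1, s')).
  move=> _; have [hs|hs] := pselect (represents s (val2 z0)).
    have q_continuous :
        continuous (fun w : cantor_space * (P * Ipm1 R) => u (w.2.1, w.1)).
      apply: (@comp_continuous _ _ _ (fun w : cantor_space * (P * Ipm1 R) => (w.2.1, w.1)) u).
        apply: pair_continuous; last exact: fst_continuous.
        by apply: (@comp_continuous _ _ _ snd fst);
          [exact: snd_continuous | exact: fst_continuous].
      exact: uc.
    have := q_continuous (s, z0) W.
    rewrite /= (u_repr _ _ _ _ hs (represents_greedy_bits (Ipm1_norm_le1 z0.2))).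
    move=> /(_ hW) near_s; apply: (@filterS _ (nbhs (s, z0)) _ _ _ _ near_s).
    by move=> -[s' z] /= + _.
  have val2_pair :
      continuous (fun w : cantor_space * (P * Ipm1 R) => (w.1, val2 w.2)).
    apply: pair_continuous; first exact: fst_continuous.
    by apply: (@comp_continuous _ _ _ snd val2);
      [exact: snd_continuous | exact: val2_continuous].
  have near_s := val2_pair (s, z0) _ (near_not_represents hs).
  by apply: (@filterS _ (nbhs (s, z0)) _ _ _ _ near_s) => -[s' z] /= hn /hn.
have := (compact_near_coveringP _).1 cantor_space_compact _ (nbhs z0)
  (fun z s => represents s (val2 z) -> W (u (z.1, s))) (nbhs_filter z0) cover.
move=> near_cover.
suff : \forall z \near z0, W (u (z.1, greedy_bits (val2 z))) by [].
apply: filterS near_cover => z /(_ (greedy_bits (val2 z)) I).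
by apply; exact: represents_greedy_bits (Ipm1_norm_le1 _).
Qed.

Lemma stream_lift_continuous (P A : topologicalType) (h : P * Ipm1 R -> A) :
  continuous h -> continuous (fun z : P * cantor_space => h (z.1, stream_point z.2)).
Proof.
move=> hc.
apply: (@comp_continuous _ _ _ (fun z : P * cantor_space => (z.1, stream_point z.2)) h) => //.
apply: pair_continuous; first exact: fst_continuous.
by apply: (@comp_continuous _ _ _ snd stream_point);
  [exact: snd_continuous | exact: stream_point_continuous].
Qed.

End IntervalStreams.

Section IntervalObject.
Context {R : realType}.
Variables (P A : topologicalType) (m : A -> A -> A).
Hypotheses (mc : continuous (fun z : A * A => m z.1 z.2))
  (midxx : forall x, m x x = x) (midC : forall x y, m x y = m y x)
  (midACA : forall x y z w, m (m x y) (m z w) = m (m x z) (m y w))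
  (mcan : cancellative m) (mit : iterative m).
Variables (xm1 x1 : P -> A).
Hypotheses (hxm1 : continuous xm1) (hx1 : continuous x1).

Definition digit_step (z : P * cantor_space) : A * (P * cantor_space) :=
  (digit (xm1 z.1) (x1 z.1) (z.2 0%N), (z.1, cantor_shift z.2)).

Lemma digit_step_continuous : continuous digit_step.
Proof.
have first_bit : continuous (fun z : P * cantor_space => z.2 0%N).
  by apply: (@comp_continuous _ _ _ snd (fun s : cantor_space => s 0%N));
    [exact: snd_continuous | exact: coord_continuous].
apply: pair_continuous.
  apply: (@continuous_piecewise _ _ _ (fun z : P * cantor_space => z.2 0%N)
    (fun d z => digit (xm1 z.1) (x1 z.1) d) _ _ _ (fun _ => erefl)).
  - by move=> z; exact: near_continuous_discrete z first_bit.
  - by case=> /=; [exact: (comp_continuous (@fst_continuous P cantor_space) hx1) |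
      exact: (comp_continuous (@fst_continuous P cantor_space) hxm1)].
apply: pair_continuous; first exact: fst_continuous.
by apply: (@comp_continuous _ _ _ snd cantor_shift);
  [exact: snd_continuous | exact: cantor_shift_continuous].
Qed.

Lemma stream_lift_shift (h : P * Ipm1 R -> A) :
  (forall p, h (p, Ineg1 R) = xm1 p) -> (forall p, h (p, Ipos1 R) = x1 p) ->
  (forall p x y, h (p, Imid x y) = m (h (p, x)) (h (p, y))) ->
  forall p s, h (p, stream_point s) =
    m (digit (xm1 p) (x1 p) (s 0%N)) (h (p, stream_point (cantor_shift s))).
Proof.
move=> hm1 h1 hmid p s; rewrite stream_point_shift hmid.
by case: (s 0%N); rewrite /= ?hm1 ?h1.
Qed.

Variable u : P * cantor_space -> A.
Hypotheses (uc : continuous u)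
  (u_shift : forall p s,
     u (p, s) = m (digit (xm1 p) (x1 p) (s 0%N)) (u (p, cantor_shift s))).

Let fiber_continuous p : continuous (fun s => u (p, s)).
Proof.
apply: (@comp_continuous _ _ _ (fun s : cantor_space => (p, s)) u) => //.
by apply: pair_continuous; [exact: cst_continuous | move=> s; exact: cvg_id].
Qed.

Definition interval_map (z : P * Ipm1 R) : A := u (z.1, greedy_bits (sval z.2)).

Lemma interval_map_m1 p : interval_map (p, Ineg1 R) = xm1 p.
Proof.
rewrite /interval_map /= greedy_bits_m1.
exact: (digit_map_false midxx midC mcan (u_shift p)).
Qed.

Lemma interval_map_1 p : interval_map (p, Ipos1 R) = x1 p.
Proof.
rewrite /interval_map /= greedy_bits_1.
exact: (digit_map_true midxx midC mcan (u_shift p)).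
Qed.

Lemma interval_map_mid p x y :
  interval_map (p, Imid x y) = m (interval_map (p, x)) (interval_map (p, y)).
Proof.
rewrite /interval_map /=; symmetry.
apply: (digit_map_mid mc midxx midC midACA mcan mit (@fiber_continuous p) (u_shift p)
  (represents_greedy_bits (Ipm1_norm_le1 x)) (represents_greedy_bits (Ipm1_norm_le1 y))
  (represents_greedy_bits (Ipm1_norm_le1 (Imid x y)))).
by rewrite /=; field.
Qed.

Lemma interval_map_continuous : continuous interval_map.
Proof.
apply: greedy_lift_continuous => // p s t x.
exact: (digit_map_represents mc midxx midC midACA mcan mit (@fiber_continuous p)
  (u_shift p)).
Qed.

End IntervalObject.

Theorem mainTheorem18 (R : realType) (P A : topologicalType) (m : A -> A -> A)
  (hA : midpoint_convex_body m) (xm1 x1 : P -> A)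
  (hxm1 : continuous xm1) (hx1 : continuous x1) :
  exists! h : P * Ipm1 R -> A,
    [/\ continuous h,
        (forall p : P, h (p, Ineg1 R) = xm1 p),
        (forall p : P, h (p, Ipos1 R) = x1 p) &
        (forall (p : P) (x y : Ipm1 R), h (p, Imid x y) = m (h (p, x)) (h (p, y)))].
Proof.
case: hA => -[mc midxx midC midACA] mcan mit.
have [u [[uc u_fix] u_unique]] := mit _ _ (digit_step_continuous hxm1 hx1).
have u_shift p s : u (p, s) = m (digit (xm1 p) (x1 p) (s 0%N)) (u (p, cantor_shift s)).
  by rewrite {1}u_fix.
exists (interval_map u); split.
  split.
  - exact: (interval_map_continuous mc midxx midC midACA mcan mit uc u_shift).
  - exact: (interval_map_m1 midxx midC mcan u_shift).
  - exact: (interval_map_1 midxx midC mcan u_shift).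
  - exact: (interval_map_mid mc midxx midC midACA mcan mit uc u_shift).
move=> h [hc hm1 h1 hmid].
have lift_u : u = fun z => h (z.1, stream_point z.2).
  apply: u_unique; split; first exact: stream_lift_continuous.
  by apply: funext => -[p s]; exact: stream_lift_shift hm1 h1 hmid p s.
by apply: funext => -[p x]; rewrite /interval_map lift_u /= stream_point_greedy_bits.
Qed.
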